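(* For any circuit-level Pauli error corresponding to $e\in\mathcal P_{n(T+1)}$ in the spacetime code of a Clifford circuit, its syndrome bitstring $\vec s(e)$ with respect to the parity checks $\mathcal O^\perp$ of the measurement outcomes of the circuit equals $(\langle e,M(\vec u)\rangle)_{\vec u\in\mathcal O^\perp}$, the binary commutators with the measured spacetime stabilizer generators.
   Context: Pauli operators are taken without phases; $\langle A,B\rangle=0$ if $A,B$ commute and $1$ otherwise. A non-adaptive Clifford circuit on $n$ qubits has time steps $t=1,\dots,T$: at step $t$, Pauli measurements (if any) are performed at time slice $t-0.5$ and then a Clifford unitary $U_t$ is applied. For $t\le t'$ let $U_{t,t'}=U_{t'-1}\cdots U_t$ (identity if $t'=t$). The spacetime code has $n(T+1)$ qubits $(q,t-0.5)$, $t=1,\dots,T+1$; for $F\in\mathcal P_{n(T+1)}$, $F_{t-0.5}\in\mathcal P_n$ is its component at slice $t-0.5$, and $\kappa_{t-0.5}(O)$ places $O\in\mathcal P_n$ at slice $t-0.5$ with identity elsewhere. Cumulant and back-cumulant: $(\overrightarrow F)_{t-0.5}=\prod_{t'=1}^{t}U_{t',t}F_{t'-0.5}U_{t',t}^\dagger$ and $(\overleftarrow F)_{t-0.5}=\prod_{t'=t}^{T+1}U_{t,t'}^\dagger F_{t'-0.5}U_{t,t'}$. A circuit error inserting $e_t$ before step $t$ is the spacetime Pauli $e=\prod_t\kappa_{t-0.5}(e_t)$. The input is a codeword of a stabilizer code with generators $S^{(\mathrm{ini})}_1,\dots,S^{(\mathrm{ini})}_s$ (values recorded perfectly at the start), and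 the circuit measures $M^{(\mathrm{circ})}_1,\dots,M^{(\mathrm{circ})}_m$. Let $\vec E=(S^{(\mathrm{ini})}_1,\dots,S^{(\mathrm{ini})}_s,M^{(\mathrm{circ})}_1,\dots,M^{(\mathrm{circ})}_m)$, with $t_j$ the time step of measurement $E_j$ ($t_j=0$ for initial stabilizers), and $\vec o\in\mathbb Z_2^{s+m}$ the outcome vector. $\mathcal O^\perp$ is a set of parity checks $\vec u\in\mathbb Z_2^{s+m}$ with $\vec u\cdot\vec o=0$ deterministically in the noiseless circuit; the syndrome of a run is $(\vec u\cdot\vec o)_{\vec u\in\mathcal O^\perp}$, and $\vec s(e)$ is the syndrome produced when error $e$ occurs. Measured spacetime stabilizer generators: $M(\vec u)=\overleftarrow{\prod_{j=s+1}^{s+m}\kappa_{t_j-0.5}(E_j^{u_j})}$. Known fact (effect of faults): with error $e$ the outcome distribution becomes $\mathbb P^{(e)}(\vec o)=\mathbb P(\vec o+\vec f(e))$, where $\mathbb P$ is the noiseless distribution, $f(e)_j=0$ for $j\le s$, and $f(e)_{s+i}=\langle(\overrightarrow e)_{t_{s+i}-0.5},M^{(\mathrm{circ})}_i\rangle$. *)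

From mathcomp Require Import all_boot all_order all_algebra.
Set Implicit Arguments. Unset Strict Implicit. Unset Printing Implicit Defensive.
Import GRing.Theory.
Local Open Scope ring_scope.

(* Phaseless n-qubit Pauli operator: binary symplectic row vector (x | z). *)
Definition pauli (n : nat) := 'rV['F_2]_(n + n).

Definition sympJ (n : nat) : 'M['F_2]_(n + n) := block_mx 0 1%:M 1%:M 0.

(* <A,B> = x_A . z_B + z_A . x_B : 0 iff A,B commute, 1 otherwise. *)
Definition pcomm (n : nat) (A B : pauli n) : 'F_2 := (A *m sympJ n *m B^T) 0 0.

(* A Clifford unitary U acts (by conjugation P |-> U P U^dag) on phaseless
   Paulis as a symplectic matrix S, in row-vector convention P |-> P *m S. *)
Definition symplectic (n : nat) (S : 'M['F_2]_(n + n)) : Prop :=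
  S *m sympJ n *m S^T = sympJ n.

(* Conjugation action of U_{t,t'} = U_{t'-1} ... U_t (identity if t = t'),
   where S t is the symplectic action of U_t (paper time indices t = 1..T). *)
Definition Uprod (n : nat) (S : nat -> 'M['F_2]_(n + n)) (t t' : nat)
  : 'M['F_2]_(n + n) := \prod_(t <= i < t') S i.

(* Spacetime Pauli on n(T+1) qubits, given slice by slice:
   index j : 'I_T.+1 is the time slice (j+1) - 0.5 = j + 0.5. *)
Definition stpauli (n T : nat) := {ffun 'I_T.+1 -> pauli n}.

Definition stcomm (n T : nat) (E F : stpauli n T) : 'F_2 :=
  \sum_(j < T.+1) pcomm (E j) (F j).

Definition kappa (n T : nat) (j : 'I_T.+1) (O : pauli n) : stpauli n T :=
  [ffun j' => if j' == j then O else 0].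

(* Cumulant: (F->)_{t-0.5} = prod_{t'=1}^{t} U_{t',t} F_{t'-0.5} U_{t',t}^dag
   (slice j <-> t = j+1). Products of phaseless Paulis are sums. *)
Definition cumulant (n T : nat) (S : nat -> 'M['F_2]_(n + n)) (F : stpauli n T)
  : stpauli n T :=
  [ffun j : 'I_T.+1 => \sum_(j' < T.+1 | (j' <= j)%N) F j' *m Uprod S j'.+1 j.+1].

Definition backcumulant (n T : nat) (S : nat -> 'M['F_2]_(n + n)) (F : stpauli n T)
  : stpauli n T :=
  [ffun j : 'I_T.+1 =>
     \sum_(j' < T.+1 | (j <= j')%N) F j' *m invmx (Uprod S j.+1 j'.+1)].

Definition dotv (k : nat) (u v : 'rV['F_2]_k) : 'F_2 := (u *m v^T) 0 0.

(* Measured spacetime stabilizer generator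
   M(u) = back-cumulant of prod_{i} kappa_{t_{s+i}-0.5}(M^circ_i ^ u_{s+i}).
   tm i : 'I_T.+1 is the slice index of the i-th circuit measurement. *)
Definition Mgen (n T s m : nat) (S : nat -> 'M['F_2]_(n + n))
  (Mc : 'I_m -> pauli n) (tm : 'I_m -> 'I_T.+1) (u : 'rV['F_2]_(s + m))
  : stpauli n T :=
  backcumulant S (\sum_(i < m) kappa (tm i) (u 0 (rshift s i) *: Mc i)).

Definition flipvec (n T s m : nat) (S : nat -> 'M['F_2]_(n + n))
  (Mc : 'I_m -> pauli n) (tm : 'I_m -> 'I_T.+1) (e : stpauli n T)
  : 'rV['F_2]_(s + m) :=
  row_mx (0 : 'rV['F_2]_s) (\row_(i < m) pcomm (cumulant S e (tm i)) (Mc i)).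

From mathcomp Require Import all_boot all_order all_algebra.
Import GRing.Theory Num.Theory.
Local Open Scope ring_scope.
Set Implicit Arguments. Unset Strict Implicit.

(** Cumulant and back-cumulant are adjoint for the spacetime symplectic form:
since each Clifford step acts symplectically, moving a Pauli forward through
[U_{t,t'}] on one side of a commutator is the same as moving the other Pauli
backward through [U_{t,t'}^dag].  Hence [<e, M(u)> = <e->, sum_i u_i kappa(M_i)>
= u . f(e)].  A sample [o] reachable under the error satisfies
[u . (o + f(e)) = 0] for every check [u], so [u . o = u . f(e)] over [F_2]. *)

Lemma sympJ_sqr n : sympJ n *m sympJ n = 1%:M.
Proof.
by rewrite /sympJ mulmx_block !mulmx0 !mul0mx !mulmx1 !addr0 !add0r -scalar_mx_block.
Qed.

Lemma symplectic_unit n (U : 'M['F_2]_(n + n)) : symplectic U -> U \in unitmx.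
Proof.
move=> sympU; suff /mulmx1_unit[] : U *m (sympJ n *m U^T *m sympJ n) = 1%:M by [].
by rewrite !mulmxA sympU sympJ_sqr.
Qed.

Lemma symplectic1 n : symplectic (1%:M : 'M['F_2]_(n + n)).
Proof. by rewrite /symplectic mul1mx trmx1 mulmx1. Qed.

Lemma symplecticM n (A B : 'M['F_2]_(n + n)) :
  symplectic A -> symplectic B -> symplectic (A *m B).
Proof.
rewrite /symplectic => sympA sympB.
by rewrite trmx_mul -!mulmxA [B *m _]mulmxA [B *m _ *m _]mulmxA sympB mulmxA.
Qed.

Lemma symplectic_Uprod n (S : nat -> 'M['F_2]_(n + n)) a b :
  (forall i, (a <= i < b)%N -> symplectic (S i)) -> symplectic (Uprod S a b).
Proof.
move=> sympS; rewrite /Uprod big_seq_cond.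
apply: (big_ind (@symplectic n)); [exact: symplectic1 | exact: symplecticM |].
by move=> i /andP[]; rewrite mem_index_iota => /sympS.
Qed.

Lemma pcomm_suml n I (r : seq I) (P : pred I) (F : I -> pauli n) (B : pauli n) :
  pcomm (\sum_(i <- r | P i) F i) B = \sum_(i <- r | P i) pcomm (F i) B.
Proof. by rewrite /pcomm !mulmx_suml summxE. Qed.

Lemma pcomm_sumr n I (r : seq I) (P : pred I) (F : I -> pauli n) (A : pauli n) :
  pcomm A (\sum_(i <- r | P i) F i) = \sum_(i <- r | P i) pcomm A (F i).
Proof. by rewrite /pcomm raddf_sum mulmx_sumr summxE. Qed.

Lemma pcommZr n a (A B : pauli n) : pcomm A (a *: B) = a * pcomm A B.
Proof. by rewrite /pcomm linearZ -scalemxAr mxE. Qed.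

Lemma pcomm0r n (A : pauli n) : pcomm A 0 = 0.
Proof. by rewrite /pcomm trmx0 mulmx0 mxE. Qed.

Lemma pcomm_mulmx_symplectic n (U : 'M['F_2]_(n + n)) (A B : pauli n) :
  symplectic U -> pcomm (A *m U) B = pcomm A (B *m invmx U).
Proof.
move=> sympU; have unitU := symplectic_unit sympU.
have UJ : U *m sympJ n = sympJ n *m (invmx U)^T.
  by rewrite -[in RHS]sympU -!mulmxA -trmx_mul mulVmx // trmx1 mulmx1.
by rewrite /pcomm -(mulmxA A U) UJ trmx_mul !mulmxA.
Qed.

Lemma stcomm_sumr n T I (r : seq I) (P : pred I) (F : I -> stpauli n T) E :
  stcomm E (\sum_(i <- r | P i) F i) = \sum_(i <- r | P i) stcomm E (F i).
Proof.
rewrite /stcomm exchange_big; apply: eq_bigr => j _.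
by rewrite sum_ffunE pcomm_sumr.
Qed.

Lemma stcomm_kappar n T (E : stpauli n T) j O : stcomm E (kappa j O) = pcomm (E j) O.
Proof.
rewrite /stcomm (bigD1 j) //= big1 ?addr0 => [|j' /negbTE neq_j'j].
  by rewrite ffunE eqxx.
by rewrite ffunE neq_j'j pcomm0r.
Qed.

Section Cumulants.

Variables (n T : nat) (S : nat -> 'M['F_2]_(n + n)).
Hypothesis sympS : forall t, (1 <= t <= T)%N -> symplectic (S t).

Lemma symplectic_Uprod_slices (j j' : 'I_T.+1) : symplectic (Uprod S j.+1 j'.+1).
Proof.
apply: symplectic_Uprod => i /andP[lt_ji lt_ij']; apply: sympS.
by rewrite (leq_trans _ lt_ji) //= -ltnS (leq_trans lt_ij').
Qed.

Lemma stcomm_backcumulant (E F : stpauli n T) :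
  stcomm E (backcumulant S F) = stcomm (cumulant S E) F.
Proof.
rewrite /stcomm.
under eq_bigr => j _ do rewrite ffunE pcomm_sumr big_mkcond.
rewrite exchange_big; apply: eq_bigr => j' _.
rewrite ffunE pcomm_suml [RHS]big_mkcond /=; apply: eq_bigr => j _.
case: ifP => // _.
by rewrite pcomm_mulmx_symplectic //; apply: symplectic_Uprod_slices.
Qed.

Lemma stcomm_Mgen s m (Mc : 'I_m -> pauli n) (tm : 'I_m -> 'I_T.+1)
    (e : stpauli n T) (u : 'rV['F_2]_(s + m)) :
  stcomm e (@Mgen n T s m S Mc tm u) = dotv u (@flipvec n T s m S Mc tm e).
Proof.
rewrite /Mgen stcomm_backcumulant stcomm_sumr /dotv /flipvec mxE big_split_ord /=.
rewrite [X in _ = X + _]big1 ?add0r => [|i _]; last by rewrite mxE row_mxEl mxE mulr0.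
by apply: eq_bigr => i _; rewrite stcomm_kappar pcommZr mxE row_mxEr mxE.
Qed.

End Cumulants.

Lemma dotvDr k (u v w : 'rV['F_2]_k) : dotv u (v + w) = dotv u v + dotv u w.
Proof. by rewrite /dotv linearD mulmxDr mxE. Qed.

Theorem lemma14
  (R : numDomainType) (n T s m : nat)
  (S : nat -> 'M['F_2]_(n + n))
  (HS : forall t, (1 <= t <= T)%N -> symplectic (S t))
  (Sini : 'I_s -> pauli n)
  (Mc : 'I_m -> pauli n) (tm : 'I_m -> 'I_T.+1)
  (P : 'rV['F_2]_(s + m) -> R)
  (HP0 : forall o, 0 <= P o)
  (HP1 : \sum_o P o = 1)
  (Operp : {set 'rV['F_2]_(s + m)})
  (Hchecks : forall o, P o != 0 -> forall u, u \in Operp -> dotv u o = 0)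
  (e : stpauli n T) :
  forall o : 'rV['F_2]_(s + m),
    0 < P (o + @flipvec n T s m S Mc tm e) ->
    forall u, u \in Operp -> dotv u o = stcomm e (@Mgen n T s m S Mc tm u).
Proof.
move=> o reachable u check_u; rewrite stcomm_Mgen //.
have /eqP := Hchecks _ (lt0r_neq0 reachable) u check_u.
by rewrite dotvDr addr_eq0 oppr_pchar2 ?pchar_Fp // => /eqP.
Qed.
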